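(* Let $\gamma\in\mathbb C$ and $H_1(\gamma)=I-\gamma D$. Then $$(n!)^{1/n}|\gamma|\le K_h\bigl(H_1(\gamma)^{-1}\bigr)\le n|\gamma|.$$
   Context: Let $n\ge1$ and $\mathcal P_n$ the complex vector space of polynomials in one complex variable of degree at most $n$; $D$ is differentiation and $I$ the identity on $\mathcal P_n$ ($I-\gamma D$ is invertible). For nonzero $f$, $Z(f)$ is the multiset of roots of $f$ (with multiplicity; empty for nonzero constants); $Z(0)=\mathbb C$. For finite nonempty $A,B\subset\mathbb C$, $d_h(A,B)=\max_{y\in B}\min_{x\in A}|x-y|$, with conventions $d_h(\emptyset,\emptyset)=0$, $d_h(A,\emptyset)=d_h(\emptyset,A)=+\infty$ for $A\ne\emptyset$, and $d_h(A,B)=0$ if one of $A,B$ equals $\mathbb C$ and the other is nonempty. $K_h(T)=\sup_{f\in\mathcal P_n}d_h(Z(f),Z(Tf))$. *)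

From HB Require Import structures.
From mathcomp Require Import all_boot all_order all_algebra.
From mathcomp Require Import all_classical all_reals.
From mathcomp Require Import ereal exp.
From mathcomp Require Import complex.
Set Implicit Arguments. Unset Strict Implicit. Unset Printing Implicit Defensive.
Import Order.TTheory GRing.Theory Num.Theory.
Local Open Scope ring_scope.
Local Open Scope classical_set_scope.

Section Defs.
Variable R : realType.
Local Notation C := (R[i]).

Definition cabs (z : C) : R := Normc.normc z.

Definition Pn (n : nat) : set {poly C} := [set f | (size f <= n.+1)%N].

(* Z(f) as a set of points (multiplicities are irrelevant for d_h);
   Z(0) = C, Z(nonzero constant) = empty set. *)
Definition Zset (f : {poly C}) : set C := [set z | root f z].

(* d_h(A,B) = max_{y in B} min_{x in A} |x - y|, with the paper's conventions *)
Definition d_h (A B : set C) : \bar R :=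
  if `[< A = set0 >] && `[< B = set0 >] then 0%E
  else if `[< A = set0 >] || `[< B = set0 >] then +oo%E
  else if `[< A = setT >] || `[< B = setT >] then 0%E
  else ereal_sup [set ereal_inf [set (cabs (x - y))%:E | x in A] | y in B].

Definition K_h (n : nat) (T : {poly C} -> {poly C}) : \bar R :=
  ereal_sup [set d_h (Zset f) (Zset (T f)) | f in Pn n].

End Defs.

From HB Require Import structures.
From mathcomp Require Import all_boot all_order all_algebra.
From mathcomp Require Import all_classical all_reals.
From mathcomp Require Import ereal exp.
From mathcomp Require Import complex.
From mathcomp Require Import ring.
Set Implicit Arguments. Unset Strict Implicit. Unset Printing Implicit Defensive.
Import Order.TTheory GRing.Theory Num.Theory.
Local Open Scope ring_scope.

(* On polynomials, (I - gam D)^-1 is the finite Neumann series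
   S f = \sum_k gam^k f^(k), and Taylor's formula gives (S f)(y) = L(f(gam X + y))
   for the functional L(X^i) = i!.
   Upper bound: if every root x of f (of degree m) satisfies |x - y| > m |gam|,
   then f(gam X + y) is a nonzero multiple of \prod_x (1 + u_x X) with
   |u_x| < 1/m.  The polynomial z |-> L((1 + z X)^m) = \sum_l m^_l z^l has no
   zero in the disk |z| < 1/m, and multiplying the argument of L by a factor
   1 + u X amounts to taking a polar derivative with respect to u, which keeps
   the disk zero-free by Laguerre's theorem.  Evaluating at z = 0 gives
   L(\prod_x (1 + u_x X)) <> 0, so y is not a root of S f.
   Lower bound: S X^n is monic with constant term gam^n n!, so one of its roots
   has modulus at least (n!)^(1/n) |gam|, whereas X^n only vanishes at 0. *)

Lemma big_ord_widen0 (V : nmodType) (n m : nat) (F : nat -> V) :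
  (n <= m)%N -> (forall k, (n <= k < m)%N -> F k = 0) ->
  \sum_(k < n) F k = \sum_(k < m) F k.
Proof.
move=> le_nm F0; rewrite (big_ord_widen m F le_nm) big_mkcond /=.
by apply: eq_bigr => k _; case: ltnP => // nk; rewrite F0 // nk ltn_ord.
Qed.

Lemma size_deriv_le (R : nzSemiRingType) (p : {poly R}) : (size p^`() <= size p)%N.
Proof.
have [->|p0] := eqVneq p 0; first by rewrite deriv0.
exact: ltnW (lt_size_deriv p0).
Qed.

Lemma size_derivn_le (R : nzSemiRingType) (p : {poly R}) k : (size p^`(k) <= size p)%N.
Proof.
elim: k => [|k IHk]; first by rewrite derivn0.
by rewrite derivnS (leq_trans (size_deriv_le _)).
Qed.

Section FactorialFunctional.
Variable R : comNzRingType.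
Implicit Types f g A : {poly R}.

(* [Lfact f] is the Laplace integral \int_0^oo f(t) e^-t dt. *)
Definition Lfact f : R := \sum_(i < size f) f`_i * i`!%:R.

Lemma Lfact_widen f N : (size f <= N)%N -> Lfact f = \sum_(i < N) f`_i * i`!%:R.
Proof.
move=> le_fN; apply: (big_ord_widen0 (F := fun i => f`_i * i`!%:R)) => // i /andP[fi _].
by rewrite nth_default // mul0r.
Qed.

Lemma Lfact0 : Lfact 0 = 0.
Proof. by rewrite /Lfact size_poly0 big_ord0. Qed.

Lemma LfactD f g : Lfact (f + g) = Lfact f + Lfact g.
Proof.
pose N := maxn (size f) (size g).
rewrite (@Lfact_widen (f + g) N) ?(leq_trans (size_polyD _ _)) //.
rewrite (@Lfact_widen f N) ?leq_maxl // (@Lfact_widen g N) ?leq_maxr //.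
by rewrite -big_split; apply: eq_bigr => i _; rewrite coefD mulrDl.
Qed.

Lemma LfactZ c f : Lfact (c *: f) = c * Lfact f.
Proof.
rewrite (@Lfact_widen (c *: f) (size f)) ?size_scale_leq // /Lfact mulr_sumr.
by apply: eq_bigr => i _; rewrite coefZ mulrA.
Qed.

Lemma Lfact_Xn k : Lfact 'X^k = k`!%:R.
Proof.
rewrite (@Lfact_widen _ k.+1) ?size_polyXn // big_ord_recr /= coefXn eqxx mul1r.
by rewrite big1 ?add0r // => i _; rewrite coefXn ltn_eqF ?mul0r.
Qed.

Lemma LfactE f : Lfact f = f`_0 + Lfact f^`().
Proof.
rewrite (@Lfact_widen f (size f).+1) // big_ord_recl mulr1.
rewrite (@Lfact_widen f^`() (size f)) ?size_deriv_le //; congr (_ + _).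
apply: eq_bigr => i _; rewrite coef_deriv lift0 factS natrM mulrA.
by congr (_ * _); exact: mulr_natr.
Qed.

(* [Lpow A k] is the polynomial z |-> Lfact (A * (1 + z X)^k). *)
Definition Lpow A k : {poly R} := \poly_(l < k.+1) ('C(k, l)%:R * Lfact (A * 'X^l)).

Lemma coef_Lpow A k l : (Lpow A k)`_l = 'C(k, l)%:R * Lfact (A * 'X^l).
Proof. by rewrite coef_poly; case: ltnP => // lt_kl; rewrite bin_small // mul0r. Qed.

Lemma horner0_Lpow A : (Lpow A 0).[0] = Lfact A.
Proof. by rewrite horner_coef0 coef_Lpow bin0 mul1r mulr1. Qed.

Lemma Lpow_polar A k (al : R) :
  k.+1%:R *: Lpow (A * (1 + al *: 'X)) k =
  k.+1%:R *: Lpow A k.+1 - ('X - al%:P) * (Lpow A k.+1)^`().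
Proof.
apply/polyP => l; rewrite coefB coefZ mulrBl coefB coefCM coefXM coefZ !coef_Lpow.
have -> : A * (1 + al *: 'X) * 'X^l = A * 'X^l + al *: (A * 'X^(l.+1)).
  by rewrite exprS -!mul_polyC; ring.
rewrite LfactD LfactZ; case: l => [|l]; rewrite /= ?coef_deriv ?coef_Lpow.
  by rewrite !bin0 bin1 mulr1n sub0r opprK; ring.
set K : R := k.+1%:R; set a : R := 'C(k, l.+1)%:R.
set b : R := 'C(k.+1, l.+1)%:R; set c : R := 'C(k.+1, l.+2)%:R.
have bin_down : K * b - b * l.+1%:R = K * a.
  apply/eqP; rewrite subr_eq -!natrM -natrD; apply/eqP; congr _%:R.
  have [le_lk|lt_kl] := leqP l.+1 k.+1; last by rewrite !bin_small ?muln0 ?mul0n // ltnW.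
  by rewrite mul_bin_down [(_ * l.+1)%N]mulnC -mulnDl subnK.
have bin_diag : c * l.+2%:R = K * a by rewrite -!natrM mulnC mul_bin_diag.
rewrite -[_ *+ l.+1]mulr_natr -[_ *+ l.+2]mulr_natr.
transitivity ((K * b - b * l.+1%:R) * Lfact (A * 'X^(l.+1))
    + al * (c * l.+2%:R) * Lfact (A * 'X^(l.+2))); last by ring.
by rewrite bin_down bin_diag; ring.
Qed.

Lemma horner_Lpow1 m (z : R) :
  (Lpow 1 m).[z] = \sum_(l < m.+1) (m ^_ l)%:R * z ^+ l.
Proof.
by rewrite horner_poly; apply: eq_bigr => l _; rewrite mul1r Lfact_Xn -natrM bin_ffact.
Qed.

(* The subtraction does not truncate, since m ^_ l.+1 = m ^_ l * (m - l). *)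
Definition ffact_defect m l := (m * m ^_ l - m ^_ l.+1)%N.

Lemma ffact_defect_eq m (z : R) :
  (1 - m%:R * z) * \sum_(l < m.+1) (m ^_ l)%:R * z ^+ l =
  1 - \sum_(l < m.+1) (ffact_defect m l)%:R * z ^+ l.+1.
Proof.
have le_ffact l : (m ^_ l.+1 <= m * m ^_ l)%N.
  by rewrite ffactnSr mulnC leq_mul2r leq_subr orbT.
have shift : \sum_(l < m.+1) (m ^_ l.+1)%:R * z ^+ l.+1 =
    \sum_(l < m.+1) (m ^_ l)%:R * z ^+ l - 1.
  rewrite [in RHS]big_ord_recl big_ord_recr /= ffactn0 expr0 mulr1 ffact_small // mul0r addr0.
  by rewrite addrC addKr.
rewrite /ffact_defect [in RHS](eq_bigr (fun l : 'I__ => m%:R * z * ((m ^_ l)%:R * z ^+ l)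
    - (m ^_ l.+1)%:R * z ^+ l.+1)) => [|l _]; last by rewrite natrB // natrM exprS; ring.
by rewrite sumrB shift -mulr_sumr; ring.
Qed.

End FactorialFunctional.

Lemma ffact_defect_top m : (0 < m)%N -> (0 < ffact_defect m m)%N.
Proof.
move=> m0; rewrite /ffact_defect (@ffact_small m m.+1) // subn0 ffactnn.
by rewrite muln_gt0 m0 fact_gt0.
Qed.

Lemma ltr_sum_ffact_defect (R : numDomainType) m (s t : R) :
  (0 < m)%N -> 0 <= s -> s < t ->
  \sum_(l < m.+1) (ffact_defect m l)%:R * s ^+ l.+1 <
  \sum_(l < m.+1) (ffact_defect m l)%:R * t ^+ l.+1.
Proof.
move=> m0 s0 st; have t0 := le_trans s0 (ltW st).
rewrite [ltLHS]big_ord_recr [ltRHS]big_ord_recr /= ler_ltD //.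
  by apply: ler_sum => l _; rewrite ler_wpM2l ?ler0n // lerXn2r ?nnegrE // ltW.
by rewrite ltr_pM2l ?ltr0n ?ffact_defect_top // ltrXn2r ?nnegrE.
Qed.

Section NeumannSeries.
Variables (R : comNzRingType) (gam : R).
Implicit Types f g : {poly R}.

Definition H1 g := g - gam *: g^`().

Definition neumann f := \sum_(k < size f) gam ^+ k *: f^`(k).

Lemma neumann_widen f N :
  (size f <= N)%N -> neumann f = \sum_(k < N) gam ^+ k *: f^`(k).
Proof.
move=> le_fN; apply: (big_ord_widen0 (F := fun k => gam ^+ k *: f^`(k))) => // k /andP[fk _].
by rewrite derivn_poly0 // scaler0.
Qed.

Lemma neumann0 : neumann 0 = 0.
Proof. by rewrite /neumann size_poly0 big_ord0. Qed.

Lemma neumannE f : neumann f = f + gam *: neumann f^`().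
Proof.
have [->|f0] := eqVneq f 0; first by rewrite deriv0 neumann0 scaler0 addr0.
have [N sfN] : exists N, size f = N.+1 by exists (size f).-1; rewrite prednK ?size_poly_gt0.
rewrite (@neumann_widen f^`() N); last by rewrite -ltnS -sfN lt_size_deriv.
rewrite /neumann sfN big_ord_recl expr0 scale1r scaler_sumr; congr (_ + _).
by apply: eq_bigr => k _; rewrite scalerA -exprS derivSn.
Qed.

Lemma deriv_neumann f : (neumann f)^`() = neumann f^`().
Proof.
rewrite (@neumann_widen f^`() (size f)) ?size_deriv_le //.
rewrite /neumann (big_morph _ (@derivD _) (@deriv0 _)).
by apply: eq_bigr => k _; rewrite derivZ -derivnS derivSn.
Qed.

Lemma neumannK : cancel neumann H1.
Proof. by move=> f; rewrite /H1 deriv_neumann {1}neumannE addrK. Qed.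

Lemma H1_inj : injective H1.
Proof.
move=> g h eq_gh; have [//|neq_gh] := eqVneq g h.
have H1B : H1 g - H1 h = (g - h) - gam *: (g - h)^`().
  by rewrite /H1 derivB scalerBr; set a := gam *: _; set b := gam *: _; ring.
have : size (H1 g - H1 h) = size (g - h).
  rewrite H1B size_polyDl // size_polyN (leq_ltn_trans (size_scale_leq _ _)) //.
  by rewrite lt_size_deriv // subr_eq0.
rewrite eq_gh subrr size_poly0 => /esym/eqP.
by rewrite size_poly_eq0 subr_eq0 (negPf neq_gh).
Qed.

Lemma size_neumann_le f : (size (neumann f) <= size f)%N.
Proof.
apply: (big_ind (fun p : {poly R} => size p <= size f)%N); rewrite ?size_poly0 //.
  by move=> p q sp sq; rewrite (leq_trans (size_polyD _ _)) // geq_max sp sq.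
by move=> k _; rewrite (leq_trans (size_scale_leq _ _)) // size_derivn_le.
Qed.

Lemma size_neumann f : size (neumann f) = size f.
Proof.
have [->|f0] := eqVneq f 0; first by rewrite neumann0.
rewrite neumannE size_polyDl // (leq_ltn_trans (size_scale_leq _ _)) //.
exact: leq_ltn_trans (size_neumann_le _) (lt_size_deriv f0).
Qed.

Lemma lead_coef_neumann f : lead_coef (neumann f) = lead_coef f.
Proof.
have [->|f0] := eqVneq f 0; first by rewrite neumann0.
rewrite neumannE lead_coefDl // (leq_ltn_trans (size_scale_leq _ _)) //.
exact: leq_ltn_trans (size_neumann_le _) (lt_size_deriv f0).
Qed.

Lemma horner_neumann f y : (neumann f).[y] = Lfact (f \Po (gam *: 'X + y%:P)).
Proof.
elim: {f}(size f) {-2}f (leqnn (size f)) => [|N IH] f sfN.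
  move: sfN; rewrite leqn0 size_poly_eq0 => /eqP->.
  by rewrite neumann0 comp_poly0 Lfact0 horner0.
rewrite neumannE hornerD hornerZ IH; last first.
  have [->|f0] := eqVneq f 0; first by rewrite deriv0 size_poly0.
  by rewrite -ltnS (leq_trans (lt_size_deriv f0)).
rewrite [RHS]LfactE -horner_coef0 horner_comp !hornerE deriv_comp.
by rewrite derivD derivZ derivX derivC addr0 -scalerAr mulr1 LfactZ.
Qed.

End NeumannSeries.

Lemma comp_prod_XsubC (R : comNzRingType) (rs : seq R) (q : {poly R}) :
  (\prod_(x <- rs) ('X - x%:P)) \Po q = \prod_(x <- rs) (q - x%:P).
Proof.
rewrite rmorph_prod; apply: eq_bigr => x _ /=.
by rewrite comp_polyB comp_polyX comp_polyC.
Qed.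

Lemma horner_deriv_prod_XsubC (F : fieldType) (rs : seq F) z : z \notin rs ->
  (\prod_(b <- rs) ('X - b%:P))^`().[z] =
  (\prod_(b <- rs) ('X - b%:P)).[z] * \sum_(b <- rs) (z - b)^-1.
Proof.
elim: rs => [|b rs IH]; first by rewrite !big_nil -polyC1 derivC horner0 mulr0.
rewrite inE negb_or => /andP[zb /IH {}IH].
rewrite !big_cons derivM derivXsubC mul1r hornerD !hornerM IH hornerXsubC.
have zb0 : z - b != 0 by rewrite subr_eq0.
by field.
Qed.

Section ClosedFieldRoots.
Variable C : numClosedFieldType.
Implicit Types (rho z b : C) (Q : {poly C}).

Lemma moebius_normC rho z b : rho \is Num.real ->
  `|rho ^+ 2 - z^* * b| ^+ 2 - rho ^+ 2 * `|z - b| ^+ 2 =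
  (rho ^+ 2 - `|z| ^+ 2) * (rho ^+ 2 - `|b| ^+ 2).
Proof.
move=> rho_real; rewrite !normCK !rmorphB !rmorphM ?rmorphXn.
rewrite /= conjCK (conj_Creal rho_real).
ring.
Qed.

(* With D = rho^2 - |z|^2, the map b |-> 1 / (z - b) sends the exterior of the
   open disk of radius rho onto the closed disk of center -z^*/D and radius rho/D. *)
Lemma disk_inversion rho z b : `|z| < rho -> z != b ->
  (`|(rho ^+ 2 - `|z| ^+ 2) / (z - b) + z^*| <= rho) = (rho <= `|b|).
Proof.
move=> z_rho zb; have rho_gt0 : 0 < rho := le_lt_trans (normr_ge0 z) z_rho.
have zb_gt0 : 0 < `|z - b| by rewrite normr_gt0 subr_eq0.
have -> : (rho ^+ 2 - `|z| ^+ 2) / (z - b) + z^* = (rho ^+ 2 - z^* * b) / (z - b).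
  rewrite -[z^* in LHS](mulfK (_ : z - b != 0)) ?subr_eq0 // -mulrDl; congr (_ / _).
  by rewrite normCK mulrBr [z * _]mulrC addrA subrK.
have rho_ge0 := ltW rho_gt0.
rewrite normrM normfV ler_pdivrMr // -(@ler_sqr _ `|_| (rho * _)) ?nnegrE ?mulr_ge0 //.
rewrite exprMn -subr_le0 moebius_normC ?gtr0_real // pmulr_rle0.
  by rewrite subr_le0 ler_sqr ?nnegrE.
by rewrite subr_gt0 ltr_pXn2r ?nnegrE.
Qed.

(* Convexity of that disk, with [rs] padded by points at infinity, each
   contributing [z^*]. *)
Lemma norm_sum_inv_far rho z (rs : seq C) N :
  `|z| < rho -> (size rs <= N)%N -> (forall b, b \in rs -> rho <= `|b|) ->
  `|(rho ^+ 2 - `|z| ^+ 2) * \sum_(b <- rs) (z - b)^-1 + z^* *+ N| <= rho *+ N.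
Proof.
move=> z_rho; elim: rs N => [|b rs IH] N size_rs far.
  by rewrite big_nil mulr0 add0r normrMn norm_conjC ler_wMn2r ?ltW.
case: N size_rs => // N /= size_rs.
have zb : z != b by apply: contraTneq (far b (mem_head _ _)) => <-; rewrite lt_geF.
rewrite big_cons mulrDr mulrS addrACA (le_trans (ler_normD _ _)) // mulrS lerD //.
  by rewrite disk_inversion ?far ?mem_head.
by apply: IH => // c c_rs; apply: far; rewrite inE c_rs orbT.
Qed.

Lemma polar_deriv_nonroot rho Q k (al : C) :
  (size Q <= k.+2)%N -> (forall x, `|x| < rho -> ~~ root Q x) -> `|al| < rho ->
  forall z, `|z| < rho -> ~~ root (k.+1%:R *: Q - ('X - al%:P) * Q^`()) z.
Proof.
move=> size_Q Q_rho al_rho z z_rho; apply/negP => /rootP polar_z.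
have rho_real : rho \is Num.real by rewrite gtr0_real // (le_lt_trans _ al_rho).
have Qz := Q_rho z z_rho; have Q0 : Q != 0 by apply: contraNneq Qz => ->; rewrite root0.
have [rs defQ] := closed_field_poly_normal Q.
have lcQ : lead_coef Q != 0 by rewrite lead_coef_eq0.
have root_rs b : (b \in rs) = root Q b by rewrite defQ rootZ // root_prod_XsubC.
have far b : b \in rs -> rho <= `|b|.
  rewrite root_rs real_leNgt ?normr_real // => Qb.
  by apply: contraL Qb; apply: Q_rho.
have zrs : z \notin rs by rewrite root_rs.
have size_rs : (size rs <= k.+1)%N by move: size_Q; rewrite defQ size_scale // size_prod_XsubC.
have dQz : Q^`().[z] = Q.[z] * \sum_(b <- rs) (z - b)^-1.
  by rewrite defQ derivZ !hornerZ horner_deriv_prod_XsubC // mulrA.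
have sum_inv : (z - al) * \sum_(b <- rs) (z - b)^-1 = k.+1%:R.
  apply: (mulfI Qz); rewrite mulrCA -dQz [RHS]mulrC; apply/esym/eqP; rewrite -subr_eq0.
  by move: polar_z; rewrite hornerD hornerN hornerZ hornerM hornerXsubC => ->.
have zal : z != al.
  by apply: contra_eqN sum_inv => /eqP->; rewrite subrr mul0r eq_sym pnatr_eq0.
have := norm_sum_inv_far z_rho size_rs far.
rewrite -(mulKf (_ : z - al != 0) (\sum_(_ <- _) _)) ?subr_eq0 // sum_inv.
by rewrite mulrA mulr_natr -mulrnDl normrMn ler_pMn2r // disk_inversion // lt_geF.
Qed.

Lemma Lpow_prod_nonroot rho (us : seq C) (A : {poly C}) k :
  (forall u, u \in us -> `|u| < rho) ->
  (forall z, `|z| < rho -> ~~ root (Lpow A (size us + k)) z) ->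
  forall z, `|z| < rho -> ~~ root (Lpow (A * \prod_(u <- us) (1 + u *: 'X)) k) z.
Proof.
elim: us A => [|u us IH] A us_rho A_rho; first by rewrite big_nil mulr1.
rewrite big_cons mulrA; apply: IH => [v v_us|z z_rho].
  by apply: us_rho; rewrite inE v_us orbT.
have := polar_deriv_nonroot (size_poly _ _) A_rho (us_rho _ (mem_head _ _)) z_rho.
by rewrite -Lpow_polar rootZ ?pnatr_eq0.
Qed.

Lemma Lpow1_nonroot m (z : C) :
  (0 < m)%N -> `|z| < m%:R^-1 -> ~~ root (Lpow 1 m) z.
Proof.
move=> m0 z_small; apply/negP => /rootP; rewrite horner_Lpow1 => Lpow_z.
have m_unit : m%:R * m%:R^-1 = 1 :> C by rewrite mulfV ?pnatr_eq0 -?lt0n.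
have := ffact_defect_eq m (m%:R^-1 : C); have := ffact_defect_eq m z.
rewrite Lpow_z m_unit subrr !mul0r mulr0 => /esym/eqP; rewrite subr_eq0 => /eqP one_z.
move=> /esym/eqP; rewrite subr_eq0 => /eqP one_inv.
have := ltr_sum_ffact_defect m0 (normr_ge0 z) z_small.
rewrite -one_inv => /lt_geF/negbT/negP; apply.
rewrite [leLHS](_ : 1 = `|\sum_(l < m.+1) (ffact_defect m l)%:R * z ^+ l.+1|).
  rewrite (le_trans (ler_norm_sum _ _ _)) //.
  by apply: ler_sum => l _; rewrite normrM normr_nat normrX.
by rewrite -one_z normr1.
Qed.

Lemma neumann_nonroot_far (gam : C) (f : {poly C}) y : (1 < size f)%N ->
  (forall x, root f x -> (size f).-1%:R * `|gam| < `|x - y|) ->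
  ~~ root (neumann gam f) y.
Proof.
move=> size_f far; set m := (size f).-1.
have m0 : (0 < m)%N by rewrite -ltnS prednK // ltnW.
have f0 : f != 0 by rewrite -size_poly_eq0 -lt0n ltnW.
have [rs defF] := closed_field_poly_normal f.
have lcf : lead_coef f != 0 by rewrite lead_coef_eq0.
have size_rs : size rs = m by rewrite /m defF size_scale // size_prod_XsubC.
have {}far x : x \in rs -> m%:R * `|gam| < `|y - x|.
  by move=> x_rs; rewrite distrC; apply: far; rewrite defF rootZ // root_prod_XsubC.
have yx x : x \in rs -> y - x != 0.
  by move=> /far; apply: contraTneq => ->; rewrite normr0 le_gtF ?mulr_ge0 ?ler0n.
pose us := [seq gam / (y - x) | x <- rs].
have us_small u : u \in us -> `|u| < m%:R^-1.
  case/mapP=> x x_rs ->; rewrite normrM normfV ltr_pdivrMr ?normr_gt0 ?yx //.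
  by rewrite mulrC ltr_pdivlMr ?ltr0n // mulrC far.
have Lfact_us : Lfact (\prod_(u <- us) (1 + u *: 'X)) != 0.
  rewrite -[X in Lfact X]mul1r -horner0_Lpow.
  apply: (Lpow_prod_nonroot us_small) => [z z_small|].
    by rewrite addn0 size_map size_rs Lpow1_nonroot.
  by rewrite normr0 invr_gt0 ltr0n.
rewrite /root horner_neumann defF comp_polyZ comp_prod_XsubC.
rewrite (eq_big_seq (fun x => (y - x) *: (1 + (gam / (y - x)) *: 'X))) => [|x x_rs].
  rewrite big_map in Lfact_us.
  by rewrite scaler_prod !LfactZ !mulf_neq0 // prodf_seq_neq0; apply/allP => x /yx.
by rewrite scalerDr scalerA mulrCA mulfV ?yx // mulr1 alg_polyC polyCB [RHS]addrC addrA.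
Qed.

Lemma neumann_root_near (gam : C) (f : {poly C}) y :
  root (neumann gam f) y -> exists2 x, root f x & `|x - y| <= (size f).-1%:R * `|gam|.
Proof.
set r := (size f).-1%:R * `|gam|; have r_ge0 : 0 <= r by rewrite mulr_ge0 ?ler0n.
have [size_f|size_f] := leqP (size f) 1.
  rewrite neumannE -derivn1 derivn_poly0 // neumann0 scaler0 addr0 => fy.
  by exists y; rewrite // subrr normr0.
move=> fy; have [//|no_near] := pselect (exists2 x, root f x & `|x - y| <= r).
suff : ~~ root (neumann gam f) y by rewrite fy.
apply: neumann_nonroot_far => // x fx; rewrite real_ltNge ?ger0_real //.
by apply/negP => near; apply: no_near; exists x.
Qed.

Lemma monic_root_norm_ge (g : {poly C}) n (c : C) :
  (0 < n)%N -> g \is monic -> size g = n.+1 -> 0 <= c -> c ^+ n <= `|g.[0]| ->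
  exists2 y, root g y & c <= `|y|.
Proof.
move=> n0 g_monic size_g c0 cn.
have [rs defG] := closed_field_poly_normal g; rewrite (monicP g_monic) scale1r in defG.
have size_rs : size rs = n by move: size_g; rewrite defG size_prod_XsubC => -[].
have [/hasP[y y_rs cy]|/hasPn small] := boolP (has (fun y => c <= `|y|) rs).
  by exists y; rewrite // defG root_prod_XsubC.
have : \prod_(y <- rs | y \in rs) `|y| < \prod_(y <- rs | y \in rs) c.
  apply: ltr_prod => [|y y_rs].
    have : (0 < size rs)%N by rewrite size_rs.
    by case: rs {defG small size_rs} => // y rs _; rewrite /= mem_head.
  by rewrite normr_ge0 real_ltNge ?normr_real ?ger0_real // small.
rewrite -!big_seq [X in _ < X](big_nth 0) big_mkord prodr_const card_ord size_rs.
have -> : \prod_(y <- rs) `|y| = `|g.[0]|.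
  rewrite defG horner_prod normr_prod.
  by apply: eq_bigr => y _; rewrite hornerXsubC sub0r normrN.
by move=> /lt_geF; rewrite cn.
Qed.

End ClosedFieldRoots.

Section ComplexRoots.
Variable R : realType.
Local Notation C := R[i].
Implicit Types (A B : set C) (p : {poly C}).

Lemma normcE (z : C) : `|z| = (cabs z)%:C%C.
Proof. by case: z => a b; rewrite normc_def. Qed.

Lemma Zset_eq0 p : Zset p = set0 <-> size p = 1%N.
Proof.
split=> [Z0|size_p].
  apply/eqP/negPn/negP => /closed_rootP[z pz].
  have : Zset p z by exact: pz.
  by rewrite Z0.
apply/seteqP; split => z // pz.
have : size p != 1%N by apply/closed_rootP; exists z.
by rewrite size_p.
Qed.

Lemma Zset_neqT p : p != 0 -> Zset p <> setT.
Proof.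
case/closed_nonrootP => z pz ZT; have : Zset p z by rewrite ZT.
exact: negP pz.
Qed.

Lemma d_h_le A B (r : R) : 0 <= r -> (A = set0 <-> B = set0) ->
  (forall y, B y -> exists2 x, A x & cabs (x - y) <= r) -> (d_h A B <= r%:E)%E.
Proof.
move=> r0 AB near; rewrite /d_h.
have [A0|A0] := pselect (A = set0); first by rewrite (asboolT A0) (asboolT (AB.1 A0)).
have B0 : B <> set0 by move/AB.2.
rewrite (asboolF A0) (asboolF B0) /=; case: ifP => _ //.
apply: ge_ereal_sup => _ [y By <-]; have [x Ax le_r] := near y By.
by apply: ge_ereal_inf; exists (cabs (x - y))%:E; [exists x | rewrite lee_fin].
Qed.

Lemma d_h_ge A B y (r : R) : A <> set0 -> A <> setT -> B <> setT -> B y ->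
  (forall x, A x -> r <= cabs (x - y)) -> (r%:E <= d_h A B)%E.
Proof.
move=> A0 AT BT By far; have B0 : B <> set0 by move=> B0; rewrite B0 in By.
rewrite /d_h (asboolF A0) (asboolF B0) (asboolF AT) (asboolF BT) /=.
apply: (@le_trans _ _ (ereal_inf [set (cabs (x - y))%:E | x in A])).
  by apply: le_ereal_inf_tmp => _ [x Ax <-]; rewrite lee_fin far.
by apply: ereal_sup_ubound; exists y.
Qed.

Lemma cabs_ge0 (z : C) : 0 <= cabs z.
Proof. by rewrite -(lecR 0) -normcE normr_ge0. Qed.

Lemma cabs_leE (z : C) (r : R) : (cabs z <= r) = (`|z| <= r%:C%C).
Proof. by rewrite normcE lecR. Qed.

Lemma cabs_geE (z : C) (r : R) : (r <= cabs z) = (r%:C%C <= `|z|).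
Proof. by rewrite normcE lecR. Qed.

Lemma d_h_neumann_le n (gam : C) (f : {poly C}) : (size f <= n.+1)%N ->
  (d_h (Zset f) (Zset (neumann gam f)) <= (n%:R * cabs gam)%:E)%E.
Proof.
move=> size_f; apply: d_h_le; first by rewrite mulr_ge0 ?ler0n ?cabs_ge0.
  by rewrite !Zset_eq0 size_neumann.
move=> y /neumann_root_near[x fx near]; exists x => //.
rewrite cabs_leE rmorphM rmorph_nat /= -normcE (le_trans near) // ler_wpM2r // ler_nat.
by rewrite -subn1 leq_subLR add1n.
Qed.

Lemma powR_invn_expn (x : R) n : 0 <= x -> (0 < n)%N -> (x `^ n%:R^-1) ^+ n = x.
Proof.
move=> x0 n0; rewrite -powR_mulrn ?powR_ge0 // -powRrM mulVf ?powRr1 //.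
by rewrite pnatr_eq0 -lt0n.
Qed.

Lemma d_h_neumann_ge n (gam : C) : (0 < n)%N ->
  ((n`!%:R `^ n%:R^-1 * cabs gam)%:E <= d_h (Zset 'X^n) (Zset (neumann gam 'X^n)))%E.
Proof.
move=> n0; set g := neumann gam 'X^n; set c := n`!%:R `^ n%:R^-1 * cabs gam.
have Xn0 : 'X^n != 0 :> {poly C} by rewrite -size_poly_eq0 size_polyXn.
have size_g : size g = n.+1 by rewrite size_neumann size_polyXn.
have g_monic : g \is monic by rewrite monicE lead_coef_neumann lead_coefXn.
have g0 : g.[0] = gam ^+ n * n`!%:R.
  by rewrite horner_neumann addr0 comp_Xn_poly exprZn LfactZ Lfact_Xn.
have c0 : 0 <= c by rewrite mulr_ge0 ?powR_ge0 ?cabs_ge0.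
have g0_norm : `|g.[0]| = (c ^+ n)%:C%C.
  rewrite g0 normrM normrX normr_nat normcE exprMn powR_invn_expn ?ler0n //.
  by rewrite mulrC rmorphM rmorphXn rmorph_nat.
have [y gy cy] : exists2 y, root g y & c%:C%C <= `|y|.
  by apply: monic_root_norm_ge n0 g_monic size_g _ _; rewrite ?ler0c // g0_norm rmorphXn.
apply: (d_h_ge (y := y)) => //.
- by move=> /Zset_eq0/eqP; rewrite size_polyXn eqSS gtn_eqF.
- exact: Zset_neqT.
- by apply: Zset_neqT; rewrite -size_poly_eq0 size_g.
- move=> x /rootP; rewrite hornerXn => /eqP; rewrite expf_eq0 n0 /= => /eqP->.
  by rewrite sub0r cabs_geE normrN.
Qed.

End ComplexRoots.

Theorem mainTheorem17 (R : realType) (n : nat) (gamma : R[i])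
    (T : {poly R[i]} -> {poly R[i]}) :
  (1 <= n)%N ->
  (forall f : {poly R[i]}, (size f <= n.+1)%N ->
     (size (T f) <= n.+1)%N /\ T f - gamma *: (T f)^`() = f) ->
  ((powR (n`!%:R : R) (n%:R)^-1 * cabs gamma)%:E <= K_h n T)%E /\
  (K_h n T <= (n%:R * cabs gamma)%:E)%E.
Proof.
move=> n0 hT.
have TE (f : {poly R[i]}) : (size f <= n.+1)%N -> T f = neumann gamma f.
  by move=> /hT[_ HT]; apply: (@H1_inj _ gamma); rewrite neumannK.
split.
  apply: le_trans (d_h_neumann_ge gamma n0) _; apply: ereal_sup_ubound.
  by exists 'X^n; rewrite /Pn /= ?TE ?size_polyXn.
by apply: ge_ereal_sup => _ [f size_f <-]; rewrite TE //; apply: d_h_neumann_le.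
Qed.
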